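(* Let $\mathbb{G}=(\mathbb{P},E)$ be an amenable rough formal context with $\mathbb{P}=(A,X,I)$, and let $R,S\subseteq A\times X$ be the lax and strict approximations of $I$ (defined below). Then $R;R\subseteq R$ and $S\subseteq S;S$, where $;$ is the composition of relations defined below.
   Context: For any relation $T\subseteq U\times V$ and $U'\subseteq U$, $V'\subseteq V$: $T^{(0)}[V']:=\{u\in U\mid \forall v\in V'\,(uTv)\}$ and $T^{(1)}[U']:=\{v\in V\mid \forall u\in U'\,(uTv)\}$; we write $T^{(0)}[v]$ for $T^{(0)}[\{v\}]$ and $T^{(1)}[u]$ for $T^{(1)}[\{u\}]$. A polarity is $\mathbb{P}=(A,X,I)$ with $I\subseteq A\times X$; for $B\subseteq A$, $Y\subseteq X$ put $B^{\uparrow}:=I^{(1)}[B]$ and $Y^{\downarrow}:=I^{(0)}[Y]$. A set $B\subseteq A$ is Galois-stable if $B=B^{\uparrow\downarrow}$; $Y\subseteq X$ is Galois-stable if $Y=Y^{\downarrow\uparrow}$. A relation $T\subseteq A\times X$ is $I$-compatible if $T^{(0)}[x]$ is Galois-stable for every $x\in X$ and $T^{(1)}[a]$ is Galois-stable for every $a\in A$. An equivalence relation $E$ on $A$ is $I$-compatible if the class $(a)_E:=\{b\in A\mid aEb\}$ is Galois-stable for every $a\in A$. A rough formal context is $\mathbb{G}=(\mathbb{P},E)$ with $E$ an equivalence relation on $A$. Its lax and strict approximations are $R,S\subseteq A\times X$: $aRx$ iff $bIx$ for some $b\in(a)_E$; $aSx$ iff $bIx$ for all $b\in(a)_E$. $\mathbb{G}$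 is amenable if $E$, $R$ and $S$ are all $I$-compatible. For $I$-compatible $R,T\subseteq A\times X$, the composition $R;T\subseteq A\times X$ is defined by: for every $x\in X$, $(R;T)^{(0)}[x]=R^{(0)}[I^{(1)}[T^{(0)}[x]]]$ (i.e. $a\,(R;T)\,x$ iff $a\in R^{(0)}[I^{(1)}[T^{(0)}[x]]]$). *)

From Stdlib Require Import Relation_Definitions RelationClasses.

Section Defs.
Context {A X : Type}.

Definition rel0 (T : A -> X -> Prop) (V' : X -> Prop) : A -> Prop :=
  fun u => forall v, V' v -> T u v.
Definition rel1 (T : A -> X -> Prop) (U' : A -> Prop) : X -> Prop :=
  fun v => forall u, U' u -> T u v.

Definition up (I : A -> X -> Prop) (B : A -> Prop) : X -> Prop := rel1 I B.
Definition down (I : A -> X -> Prop) (Y : X -> Prop) : A -> Prop := rel0 I Y.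

Definition stableA (I : A -> X -> Prop) (B : A -> Prop) : Prop :=
  forall a, B a <-> down I (up I B) a.
Definition stableX (I : A -> X -> Prop) (Y : X -> Prop) : Prop :=
  forall x, Y x <-> up I (down I Y) x.

Definition I_compatible (I T : A -> X -> Prop) : Prop :=
  (forall x, stableA I (rel0 T (fun y => y = x))) /\
  (forall a, stableX I (rel1 T (fun b => b = a))).

Definition eclass (E : A -> A -> Prop) (a : A) : A -> Prop := fun b => E a b.

Definition E_I_compatible (I : A -> X -> Prop) (E : A -> A -> Prop) : Prop :=
  forall a, stableA I (eclass E a).

Definition laxR (I : A -> X -> Prop) (E : A -> A -> Prop) : A -> X -> Prop :=
  fun a x => exists b, E a b /\ I b x.
Definition strictS (I : A -> X -> Prop) (E : A -> A -> Prop) : A -> X -> Prop :=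
  fun a x => forall b, E a b -> I b x.

Definition amenable (I : A -> X -> Prop) (E : A -> A -> Prop) : Prop :=
  Equivalence E /\ E_I_compatible I E /\
  I_compatible I (laxR I E) /\ I_compatible I (strictS I E).

Definition comp (I R T : A -> X -> Prop) : A -> X -> Prop :=
  fun a x => rel0 R (rel1 I (rel0 T (fun y => y = x))) a.

Definition subrel (R T : A -> X -> Prop) : Prop := forall a x, R a x -> T a x.
End Defs.

(* Both inclusions rest on two elementary observations.
   (1) Galois-stable sets absorb objects: if B is stable and an object u has
       every attribute shared by B (u ∈ B^↑↓), then u ∈ B.
   (2) Because E is transitive, R^(0)[x] is closed under moving to an
       E-related object (aEu ∧ uRx ⇒ aRx), and S^(0)[x] is closed under
       moving along E the other way (aSx ∧ aEb ⇒ bSx).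
   For R;R ⊆ R, assume a (R;R) x and use stability of R^(1)[a]: it suffices
   that every u with R^(1)[a] ⊆ I^(1)[u] satisfies I u x.  Such a u lies in
   the class (a)_E and in R^(0)[x] by (1), since both I^(1)[(a)_E] (by
   reflexivity of E) and I^(1)[R^(0)[x]] (by the hypothesis a (R;R) x) are
   contained in R^(1)[a]; then aRx by (2), whence I u x.
   For S ⊆ S;S only (2) is needed. *)
From Stdlib Require Import RelationClasses.

Section RoughApproximations.
Variables (A X : Type) (I : A -> X -> Prop) (E : A -> A -> Prop).

Lemma rel0_singleton (T : A -> X -> Prop) (x : X) (u : A) :
  rel0 T (fun y => y = x) u <-> T u x.
Proof.
  split.
  - intros H. now apply H.
  - intros H y ->. exact H.
Qed.

Lemma rel1_singleton (T : A -> X -> Prop) (a : A) (v : X) :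
  rel1 T (fun b => b = a) v <-> T a v.
Proof.
  split.
  - intros H. now apply H.
  - intros H b ->. exact H.
Qed.

Lemma comp_spec (R T : A -> X -> Prop) (a : A) (x : X) :
  comp I R T a x <-> (forall v, (forall u, T u x -> I u v) -> R a v).
Proof.
  split; intros H v Hv; apply H; intros u Hu; apply Hv.
  - exact (proj1 (rel0_singleton T x u) Hu).
  - exact (proj2 (rel0_singleton T x u) Hu).
Qed.

Lemma stable_absorbs (B : A -> Prop) (u : A) :
  stableA I B -> (forall v, up I B v -> I u v) -> B u.
Proof. intros HB Hu. now apply (HB u). Qed.

Hypothesis E_equiv : Equivalence E.

Lemma laxR_E_closed (a u : A) (x : X) :
  E a u -> laxR I E u x -> laxR I E a x.
Proof.
  intros Hau [c [Huc Hcx]]. exists c. split; [|exact Hcx].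
  transitivity u; assumption.
Qed.

Lemma strictS_E_closed (a b : A) (x : X) :
  E a b -> strictS I E a x -> strictS I E b x.
Proof.
  intros Hab Hax c Hbc. apply Hax. transitivity b; assumption.
Qed.

Lemma up_eclass_laxR (a : A) (v : X) :
  up I (eclass E a) v -> laxR I E a v.
Proof. intros Hv. exists a. split; [reflexivity | now apply Hv]. Qed.

Lemma laxR_comp_sub :
  E_I_compatible I E -> I_compatible I (laxR I E) ->
  subrel (comp I (laxR I E) (laxR I E)) (laxR I E).
Proof.
  intros HEc [HR0 HR1] a x Hc.
  pose proof (proj1 (comp_spec _ _ a x) Hc) as Hshared; clear Hc.
  apply (proj1 (rel1_singleton (laxR I E) a x)), (proj2 (HR1 a x)).
  intros u Hu.
  assert (Hintent : forall v, laxR I E a v -> I u v).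
  { intros v Hv. exact (Hu v (proj2 (rel1_singleton (laxR I E) a v) Hv)). }
  assert (Hau : E a u).
  { apply (stable_absorbs (eclass E a) u (HEc a)).
    intros v Hv. now apply Hintent, up_eclass_laxR. }
  assert (Hux : laxR I E u x).
  { apply (proj1 (rel0_singleton (laxR I E) x u)),
          (stable_absorbs _ u (HR0 x)).
    intros v Hv. apply Hintent, Hshared.
    intros w Hw. exact (Hv w (proj2 (rel0_singleton (laxR I E) x w) Hw)). }
  now apply Hintent, (laxR_E_closed a u x).
Qed.

Lemma strictS_sub_comp :
  subrel (strictS I E) (comp I (strictS I E) (strictS I E)).
Proof.
  intros a x Hax. apply (proj2 (comp_spec (strictS I E) (strictS I E) a x)).
  intros v Hv b Hab. apply Hv, (strictS_E_closed a b x Hab Hax).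
Qed.

End RoughApproximations.

Theorem mainTheorem2 (A X : Type) (I : A -> X -> Prop) (E : A -> A -> Prop) :
  amenable I E ->
  subrel (comp I (laxR I E) (laxR I E)) (laxR I E) /\
  subrel (strictS I E) (comp I (strictS I E) (strictS I E)).
Proof.
  intros [HE [HEc [HR _]]].
  split.
  - exact (laxR_comp_sub A X I E HE HEc HR).
  - exact (strictS_sub_comp A X I E HE).
Qed.
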